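(* Let $D\ge 2$ and let $b_1<b_2<\dots<b_m$ be positive integers with $2\le b_{i+1}/b_i\le D$ for all $1\le i<m$. After $\mathcal{O}(m)$ preprocessing time, for any given integer $t$ one can locate $t$ in the sequence (i.e. find the index $i$ with $b_i\le t<b_{i+1}$, or report $t<b_1$ or $t\ge b_m$) in $\mathcal{O}(\log\log D)$ time.
   Context: Complexity is measured in a unit-cost RAM model in which arithmetic operations on the integers involved, including computing $\lfloor\log_2 x\rfloor$, take constant time. *)

From Stdlib Require Import ZArith List Arith Bool.
Import ListNotations.
Open Scope Z_scope.

(** Each instruction costs one time unit; arithmetic (+, -, *, floor division,
    mod, floor log2) and comparisons are unit cost, as is indirect addressing. *)

Inductive binop := OAdd | OSub | OMul | ODiv | OMod.

Definition eval_binop (o : binop) (x y : Z) : Z :=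
  match o with
  | OAdd => x + y | OSub => x - y | OMul => x * y
  | ODiv => x / y | OMod => x mod y
  end.

Inductive instr :=
| IConst (d c : Z)
| IBin (o : binop) (d a b : Z)
| ILog (d a : Z)                (* M[d] := floor(log2 M[a])  (0 if M[a] <= 0) *)
| ILoad (d a : Z)
| IStore (a s : Z)
| IJlt (a b : Z) (l : nat)
| IJmp (l : nat)
| IHalt.

Definition program := list instr.
Definition memory := Z -> Z.
Definition config : Type := (nat * memory)%type.

Definition upd (M : memory) (a v : Z) : memory :=
  fun x => if Z.eqb x a then v else M x.

Definition fetch (P : program) (pc : nat) : instr := nth pc P IHalt.

Definition step (P : program) (c : config) : config :=
  let (pc, M) := c in
  match fetch P pc with
  | IConst d v => (S pc, upd M d v)
  | IBin o d a b => (S pc, upd M d (eval_binop o (M a) (M b)))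
  | ILog d a => (S pc, upd M d (Z.log2 (M a)))
  | ILoad d a => (S pc, upd M d (M (M a)))
  | IStore a s => (S pc, upd M (M a) (M s))
  | IJlt a b l => if Z.ltb (M a) (M b) then (l, M) else (S pc, M)
  | IJmp l => (l, M)
  | IHalt => (pc, M)
  end.

Definition halted (P : program) (c : config) : Prop := fetch P (fst c) = IHalt.

Definition run (P : program) (k : nat) (M : memory) : config :=
  Nat.iter k (step P) (0%nat, M).

(* P started on memory M halts within k steps with final memory M'.
   (Once halted the configuration is fixed, so M' is well defined.) *)
Definition halts_within (P : program) (k : nat) (M M' : memory) : Prop :=
  halted P (run P k M) /\ snd (run P k M) = M'.

(** * Input conventions.
    Preprocessing input: M[0] = m, M[i] = b_i for 1 <= i <= m, all else 0.
    Query input: the memory left by preprocessing, with M[-1] := t.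
    Query output: M[-2]. *)
Definition input_mem (b : list Z) : memory :=
  fun x => if Z.eqb x 0 then Z.of_nat (length b)
           else if (0 <? x) && (x <=? Z.of_nat (length b)) then
             nth (Z.to_nat x - 1) b 0
           else 0.

(* 1-based access b_i *)
Definition bi (b : list Z) (i : nat) : Z := nth (i - 1) b 0.

Definition located (b : list Z) (t : Z) (i : nat) : Prop :=
  let m := length b in
  (i = 0%nat /\ t < bi b 1) \/
  ((1 <= i < m)%nat /\ bi b i <= t < bi b (S i)) \/
  (i = m /\ bi b m <= t).

Definition gap_seq (D : nat) (b : list Z) : Prop :=
  (forall i, (1 <= i <= length b)%nat -> 0 < bi b i) /\
  (forall i, (1 <= i < length b)%nat ->
     2 * bi b i <= bi b (S i) /\ bi b (S i) <= Z.of_nat D * bi b i).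

(* Write [lg x = floor (log2 b_x)].  The gap condition makes [lg] increase by at least 1
   and at most [log2 D + 1] from one index to the next.  Cut [lg b_1 .. lg b_m] into [m]
   buckets of width [g = (lg b_m - lg b_1) / m + 1 <= log2 D + 2]; as [lg] is strictly
   increasing, a bucket holds at most [g] indices.  Preprocessing tabulates, for every
   bucket [q], the number [F q] of indices whose bucket is at most [q].  A query [t]
   computes the bucket [q] of [floor (log2 t)]; the answer lies between [F (q - 1)] and
   [F q], an interval of length at most [g], where binary search takes
   [O (log g) = O (log log D)] steps. *)

From Pilot Require Import Defs.
From Stdlib Require Import ZArith List Lia.
Import ListNotations.
Open Scope Z_scope.

Definition reach (P : program) (c c' : config) (n : nat) : Prop :=
  Nat.iter n (step P) c = c'.

Lemma reach_refl P c : reach P c c 0.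
Proof. reflexivity. Qed.

Lemma reach_step P c c' n : reach P (step P c) c' n -> reach P c c' (S n).
Proof. unfold reach; rewrite Nat.iter_succ_r; auto. Qed.

Lemma reach_trans P c1 c2 c3 n1 n2 :
  reach P c1 c2 n1 -> reach P c2 c3 n2 -> reach P c1 c3 (n1 + n2).
Proof.
  unfold reach; intros H1 H2. rewrite Nat.add_comm, Nat.iter_add. congruence.
Qed.

Lemma reach_halts_within P n M pc M' :
  reach P (0%nat, M) (pc, M') n -> fetch P pc = IHalt -> halts_within P n M M'.
Proof. unfold halts_within, halted, run, reach; intros -> ?; auto. Qed.

Lemma upd_eq M d v x : x = d -> upd M d v x = v.
Proof. intros ->. unfold upd. now rewrite Z.eqb_refl. Qed.

Lemma upd_neq M d v x : x <> d -> upd M d v x = M x.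
Proof. unfold upd. intros H. now rewrite (proj2 (Z.eqb_neq x d) H). Qed.

Ltac simpl_upd := repeat match goal with
  | |- context [upd ?M ?d ?v ?x] =>
     first [ rewrite (upd_eq M d v x) by lia | rewrite (upd_neq M d v x) by lia ]
  end.

Ltac decide_ltb :=
  first [rewrite (proj2 (Z.ltb_lt _ _)) by lia | rewrite (proj2 (Z.ltb_ge _ _)) by lia].

Ltac ram_step P := apply reach_step; cbn [step fetch nth P eval_binop fst snd]; simpl_upd.

Lemma div_eq_diff_lt a c g : 0 < g -> a <= c -> a / g = c / g -> c - a < g.
Proof.
  intros Hg Hac Hq.
  pose proof (Z.div_mod a g ltac:(lia)). pose proof (Z.mod_pos_bound a g Hg).
  pose proof (Z.div_mod c g ltac:(lia)). pose proof (Z.mod_pos_bound c g Hg).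
  rewrite Hq in *. lia.
Qed.

Lemma div_lt_cancel a c g : 0 < g -> a / g < c / g -> a < c.
Proof.
  intros Hg Hq. destruct (Z.le_gt_cases c a) as [Hca|]; auto.
  pose proof (Z.div_le_mono c a g Hg Hca). lia.
Qed.

Lemma log2_double_lt s s' : 1 <= s -> 2 * s' <= s -> Z.log2 (2 * s') < Z.log2 (2 * s).
Proof.
  intros Hs Hle. pose proof (Z.log2_le_mono _ _ Hle).
  rewrite (Z.log2_double s) by lia. lia.
Qed.

Lemma log2_of_nat n : Z.log2 (Z.of_nat n) = Z.of_nat (Nat.log2 n).
Proof.
  destruct n as [|n]; [reflexivity|].
  destruct (Nat.log2_spec (S n) ltac:(lia)) as [Hlo Hhi].
  apply Z.log2_unique; [lia|].
  apply Nat2Z.inj_le in Hlo. apply Nat2Z.inj_lt in Hhi.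
  rewrite Nat2Z.inj_pow in Hlo, Hhi. rewrite Nat2Z.inj_succ in Hhi. lia.
Qed.

(* The table
   [F q] (see [table_entry]) lives at address [m + 2 + q] for [-1 <= q < m]; [F (-1)]
   sits at [m + 1], which the input already sets to [0].  Registers are negative
   addresses; [r_t] and [r_ans] are fixed by the query conventions of [Defs]. *)
Notation r_t := (-1) (only parsing).
Notation r_ans := (-2) (only parsing).
Notation r_logb1 := (-3) (only parsing).
Notation r_width := (-4) (only parsing).
Notation r_table := (-5) (only parsing).
Notation r_one := (-20) (only parsing).
Notation r_tmp := (-21) (only parsing).
Notation r_j := (-22) (only parsing).
Notation r_slot := (-23) (only parsing).
Notation r_cur := (-24) (only parsing).
Notation r_end := (-25) (only parsing).
Notation r_zero := (-26) (only parsing).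
Notation r_val := (-27) (only parsing).
Notation r_prev := (-28) (only parsing).
Notation r_q := (-30) (only parsing).
Notation r_qmax := (-31) (only parsing).
Notation r_qzero := (-33) (only parsing).
Notation r_ptr := (-34) (only parsing).
Notation r_hi := (-35) (only parsing).
Notation r_lo := (-36) (only parsing).
Notation r_mid := (-37) (only parsing).
Notation r_two := (-38) (only parsing).
Notation r_bmid := (-39) (only parsing).

(* Two passes: first [F (bucket j) := j] for [j = 1..m] (the last write is the largest
   index of the bucket), then every empty slot [F q = 0] copies [F (q - 1)]. *)
Definition preprocess : program := [
  (*  0 *) IConst r_one 1;
  (*  1 *) ILog r_logb1 1;
  (*  2 *) ILoad r_tmp 0;
  (*  3 *) ILog r_tmp r_tmp;
  (*  4 *) IBin OSub r_tmp r_tmp r_logb1;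
  (*  5 *) IBin ODiv r_tmp r_tmp 0;
  (*  6 *) IBin OAdd r_width r_tmp r_one;
  (*  7 *) IBin OAdd r_table 0 r_one;
  (*  8 *) IBin OAdd r_table r_table r_one;
  (*  9 *) IConst r_j 1;
  (* 10 *) IJlt 0 r_j 19;
  (* 11 *) ILoad r_slot r_j;
  (* 12 *) ILog r_slot r_slot;
  (* 13 *) IBin OSub r_slot r_slot r_logb1;
  (* 14 *) IBin ODiv r_slot r_slot r_width;
  (* 15 *) IBin OAdd r_slot r_slot r_table;
  (* 16 *) IStore r_slot r_j;
  (* 17 *) IBin OAdd r_j r_j r_one;
  (* 18 *) IJmp 10;
  (* 19 *) IConst r_zero 0;
  (* 20 *) IBin OAdd r_cur r_table r_zero;
  (* 21 *) IBin OAdd r_end r_table 0;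
  (* 22 *) IJlt r_cur r_end 24;
  (* 23 *) IJmp 31;
  (* 24 *) ILoad r_val r_cur;
  (* 25 *) IJlt r_zero r_val 29;
  (* 26 *) IBin OSub r_prev r_cur r_one;
  (* 27 *) ILoad r_val r_prev;
  (* 28 *) IStore r_cur r_val;
  (* 29 *) IBin OAdd r_cur r_cur r_one;
  (* 30 *) IJmp 22 ].

(* Bucket [q] of [log2 t] (capped at [m - 1]), then binary search between
   [F (q - 1)] and [F q] for the largest [i] with [b_i <= t]. *)
Definition query : program := [
  (*  0 *) IConst r_ans 0;
  (*  1 *) IJlt r_t 1 26;
  (*  2 *) IConst r_qzero 0;
  (*  3 *) IConst r_two 2;
  (*  4 *) ILog r_q r_t;
  (*  5 *) IBin OSub r_q r_q r_logb1;
  (*  6 *) IBin ODiv r_q r_q r_width;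
  (*  7 *) IBin OSub r_qmax 0 r_one;
  (*  8 *) IJlt r_q r_qmax 10;
  (*  9 *) IBin OAdd r_q r_qmax r_qzero;
  (* 10 *) IBin OAdd r_ptr r_q r_table;
  (* 11 *) ILoad r_hi r_ptr;
  (* 12 *) IBin OSub r_ptr r_ptr r_one;
  (* 13 *) ILoad r_lo r_ptr;
  (* 14 *) IJlt r_lo r_hi 16;
  (* 15 *) IJmp 25;
  (* 16 *) IBin OAdd r_mid r_lo r_hi;
  (* 17 *) IBin OAdd r_mid r_mid r_one;
  (* 18 *) IBin ODiv r_mid r_mid r_two;
  (* 19 *) ILoad r_bmid r_mid;
  (* 20 *) IJlt r_t r_bmid 23;
  (* 21 *) IBin OAdd r_lo r_mid r_qzero;
  (* 22 *) IJmp 14;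
  (* 23 *) IBin OSub r_hi r_mid r_one;
  (* 24 *) IJmp 14;
  (* 25 *) IBin OAdd r_ans r_lo r_qzero ].

Section GapSequence.

Variable D : nat.
Variable b : list Z.
Hypothesis Hlen : (1 <= length b)%nat.
Hypothesis Hgap : gap_seq D b.

Definition m : Z := Z.of_nat (length b).
Definition bv (x : Z) : Z := bi b (Z.to_nat x).
Definition lg (x : Z) : Z := Z.log2 (bv x).
Definition width : Z := (lg m - lg 1) / m + 1.
Definition bucket (x : Z) : Z := (lg x - lg 1) / width.

Lemma m_pos : 1 <= m.
Proof. unfold m; lia. Qed.

Lemma bv_pos x : 1 <= x <= m -> 0 < bv x.
Proof. intros Hx. apply (proj1 Hgap). unfold m in Hx; lia. Qed.

Lemma bv_gap x : 1 <= x < m -> 2 * bv x <= bv (x + 1) <= Z.of_nat D * bv x.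
Proof.
  intros Hx. unfold bv. replace (Z.to_nat (x + 1)) with (S (Z.to_nat x)) by lia.
  apply (proj2 Hgap). unfold m in Hx; lia.
Qed.

Lemma lg_succ x : 1 <= x < m -> lg x + 1 <= lg (x + 1) <= lg x + Z.log2 (Z.of_nat D) + 1.
Proof.
  intros Hx. unfold lg. destruct (bv_gap x Hx) as [Hdouble Hratio].
  pose proof (bv_pos x ltac:(lia)) as Hpos.
  pose proof (Z.log2_double (bv x) Hpos).
  pose proof (Z.log2_mul_above (Z.of_nat D) (bv x) ltac:(lia) ltac:(lia)).
  pose proof (Z.log2_le_mono _ _ Hdouble). pose proof (Z.log2_le_mono _ _ Hratio). lia.
Qed.

Lemma lg_increase x k : 1 <= x -> x + Z.of_nat k <= m ->
  lg x + Z.of_nat k <= lg (x + Z.of_nat k) <= lg x + Z.of_nat k * (Z.log2 (Z.of_nat D) + 1).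
Proof.
  intros Hx. induction k as [|k IH]; intros Hk.
  - rewrite !Z.add_0_r. lia.
  - rewrite Nat2Z.inj_succ in *.
    replace (x + Z.succ (Z.of_nat k)) with (x + Z.of_nat k + 1) by lia.
    pose proof (lg_succ (x + Z.of_nat k) ltac:(lia)). specialize (IH ltac:(lia)). nia.
Qed.

Lemma lg_mono x y : 1 <= x <= y -> y <= m -> lg x + (y - x) <= lg y.
Proof.
  intros Hxy Hy. pose proof (lg_increase x (Z.to_nat (y - x)) ltac:(lia)) as H.
  rewrite Z2Nat.id in H by lia. replace (x + (y - x)) with y in H by lia. lia.
Qed.

Lemma lg_spread : lg m - lg 1 <= (m - 1) * (Z.log2 (Z.of_nat D) + 1).
Proof.
  pose proof m_pos as Hm. pose proof (lg_increase 1 (Z.to_nat (m - 1)) ltac:(lia)) as H.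
  rewrite Z2Nat.id in H by lia. replace (1 + (m - 1)) with m in H by lia. lia.
Qed.

Lemma width_pos : 1 <= width.
Proof.
  pose proof m_pos. pose proof (lg_mono 1 m ltac:(lia) ltac:(lia)).
  pose proof (Z.div_pos (lg m - lg 1) m ltac:(lia) ltac:(lia)). unfold width; lia.
Qed.

Lemma width_le : width <= Z.log2 (Z.of_nat D) + 2.
Proof.
  pose proof m_pos. pose proof lg_spread. pose proof (Z.log2_nonneg (Z.of_nat D)).
  assert ((lg m - lg 1) / m <= Z.log2 (Z.of_nat D) + 1)
    by (apply Z.div_le_upper_bound; nia).
  unfold width; lia.
Qed.

Lemma lg_spread_lt : lg m - lg 1 < m * width.
Proof.
  pose proof m_pos. unfold width.
  pose proof (Z.div_mod (lg m - lg 1) m ltac:(lia)).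
  pose proof (Z.mod_pos_bound (lg m - lg 1) m ltac:(lia)). nia.
Qed.

Lemma bucket_mono x y : 1 <= x <= y -> y <= m -> bucket x <= bucket y.
Proof.
  intros. pose proof width_pos. pose proof (lg_mono x y ltac:(lia) ltac:(lia)).
  apply Z.div_le_mono; lia.
Qed.

Lemma bucket_range x : 1 <= x <= m -> 0 <= bucket x <= m - 1.
Proof.
  intros Hx. pose proof width_pos. pose proof lg_spread_lt. split.
  - pose proof (lg_mono 1 x ltac:(lia) ltac:(lia)). apply Z.div_pos; lia.
  - assert (bucket x < m); [|lia].
    pose proof (lg_mono x m ltac:(lia) ltac:(lia)). apply Z.div_lt_upper_bound; lia.
Qed.

(* Consecutive indices differ by at least 1 in [lg], so one bucket holds fewer than [width] of them. *)
Lemma bucket_span x y : 1 <= x <= y -> y <= m -> bucket x = bucket y -> y - x < width.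
Proof.
  intros Hxy Hy Hq. pose proof width_pos. pose proof (lg_mono x y Hxy Hy).
  pose proof (div_eq_diff_lt (lg x - lg 1) (lg y - lg 1) width ltac:(lia) ltac:(lia) Hq).
  lia.
Qed.

(* [table_entry q v] says [v = F q]. *)
Definition table_entry (q v : Z) : Prop :=
  0 <= v <= m /\ forall j, 1 <= j <= m -> (j <= v <-> bucket j <= q).

Definition brackets (t lo hi : Z) : Prop :=
  0 <= lo <= hi /\ hi <= m /\ (1 <= lo -> bv lo <= t) /\ (hi < m -> t < bv (hi + 1)).

Lemma table_entry_neg1 : table_entry (-1) 0.
Proof. split; [pose proof m_pos; lia|]. intros j Hj. pose proof (bucket_range j Hj). lia. Qed.

Lemma table_entry_le q lo hi : table_entry (q - 1) lo -> table_entry q hi -> lo <= hi.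
Proof.
  intros [Hlo Flo] [Hhi Fhi]. destruct (Z.le_gt_cases lo 0); [lia|].
  apply (Fhi lo ltac:(lia)). enough (bucket lo <= q - 1) by lia. apply (Flo lo ltac:(lia)). lia.
Qed.

Lemma table_entry_gap q lo hi : table_entry (q - 1) lo -> table_entry q hi -> hi - lo <= width.
Proof.
  intros Elo Ehi. pose proof (table_entry_le q lo hi Elo Ehi).
  destruct Elo as [Hlo Flo], Ehi as [Hhi Fhi].
  destruct (Z.le_gt_cases hi lo); [pose proof width_pos; lia|].
  assert (bucket (lo + 1) > q - 1).
  { assert (~ lo + 1 <= lo) as Hn by lia. rewrite (Flo (lo + 1) ltac:(lia)) in Hn. lia. }
  assert (bucket hi <= q) by (apply (Fhi hi ltac:(lia)); lia).
  pose proof (bucket_mono (lo + 1) hi ltac:(lia) ltac:(lia)).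
  pose proof (bucket_span (lo + 1) hi ltac:(lia) ltac:(lia) ltac:(lia)). lia.
Qed.

Definition query_bucket (t : Z) : Z := Z.min ((Z.log2 t - lg 1) / width) (m - 1).

Lemma table_brackets t lo hi : bv 1 <= t ->
  table_entry (query_bucket t - 1) lo -> table_entry (query_bucket t) hi -> brackets t lo hi.
Proof.
  intros Ht Elo Ehi. set (q := query_bucket t) in *. pose proof (table_entry_le q lo hi Elo Ehi).
  pose proof width_pos. pose proof (bv_pos 1 ltac:(pose proof m_pos; lia)).
  assert (lg 1 <= Z.log2 t) by (apply Z.log2_le_mono; lia).
  destruct Elo as [Hlo Flo], Ehi as [Hhi Fhi].
  split; [lia|split; [lia|split]].
  - intros Hlo1. apply Z.lt_le_incl, Z.log2_lt_cancel.
    assert (bucket lo <= q - 1) by (apply (Flo lo ltac:(lia)); lia).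
    enough (lg lo - lg 1 < Z.log2 t - lg 1) by (unfold lg in *; lia).
    apply (div_lt_cancel _ _ width); [lia|]. unfold bucket, q, query_bucket in *. lia.
  - intros Hhim. apply Z.log2_lt_cancel.
    assert (bucket (hi + 1) > q).
    { assert (~ hi + 1 <= hi) as Hn by lia. rewrite (Fhi (hi + 1) ltac:(lia)) in Hn. lia. }
    pose proof (bucket_range (hi + 1) ltac:(lia)).
    enough (Z.log2 t - lg 1 < lg (hi + 1) - lg 1) by (unfold lg in *; lia).
    apply (div_lt_cancel _ _ width); [lia|]. unfold bucket, q, query_bucket in *. lia.
Qed.

Lemma brackets_located t i : brackets t i i -> located b t (Z.to_nat i).
Proof.
  intros (Hi & Him & Hlo & Hhi). unfold located, m, bv in *.
  destruct (Z.eq_dec i 0) as [->|Hi0]; [left; split; auto; apply Hhi; lia|].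
  right. destruct (Z.eq_dec i (Z.of_nat (length b))) as [->|Him'].
  - right. rewrite Nat2Z.id in *. split; auto. apply Hlo; lia.
  - left. split; [lia|]. split; [apply Hlo; lia|].
    replace (S (Z.to_nat i)) with (Z.to_nat (i + 1)) by lia. apply Hhi; lia.
Qed.

Definition preprocessed (M : memory) : Prop :=
  M 0 = m /\ (forall x, 1 <= x <= m -> M x = bv x) /\
  M r_logb1 = lg 1 /\ M r_width = width /\ M r_table = m + 2 /\ M r_one = 1 /\
  forall q, -1 <= q < m -> table_entry q (M (m + 2 + q)).

Definition search_mem (t : Z) (M : memory) : Prop :=
  M r_t = t /\ M r_one = 1 /\ M r_qzero = 0 /\ M r_two = 2 /\
  forall x, 1 <= x <= m -> M x = bv x.

Lemma search_exit t M lo : search_mem t M -> M r_lo = lo -> M r_hi = lo ->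
  exists M', reach query (14%nat, M) (26%nat, M') 3 /\ M' r_ans = lo.
Proof.
  intros (Ht & Hone & Hzero & Htwo & Hb) Hlo Hhi. eexists. split.
  - ram_step query. rewrite Hlo, Hhi. decide_ltb.
    ram_step query. ram_step query. rewrite Hlo, Hzero. apply reach_refl.
  - simpl_upd. lia.
Qed.

Lemma search_step t M lo hi :
  search_mem t M -> M r_lo = lo -> M r_hi = hi -> lo < hi -> brackets t lo hi ->
  exists M' lo' hi', reach query (14%nat, M) (14%nat, M') 8 /\ search_mem t M' /\
    M' r_lo = lo' /\ M' r_hi = hi' /\ brackets t lo' hi' /\ 2 * (hi' - lo') <= hi - lo.
Proof.
  intros (Ht & Hone & Hzero & Htwo & Hb) Hlo Hhi Hlt (B1 & B2 & B3 & B4).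
  set (mid := (lo + hi + 1) / 2).
  assert (Hmid : lo + 1 <= mid <= hi /\ lo + hi <= 2 * mid <= lo + hi + 1).
  { pose proof (Z.div_mod (lo + hi + 1) 2 ltac:(lia)) as Hdiv.
    pose proof (Z.mod_pos_bound (lo + hi + 1) 2 ltac:(lia)). fold mid in Hdiv. lia. }
  destruct (Z.ltb_spec t (bv mid)) as [Hbelow|Habove].
  - eexists; exists lo, (mid - 1). split; [|split; [|split; [|split; [|split]]]].
    + ram_step query. rewrite Hlo, Hhi. decide_ltb. ram_step query. rewrite Hlo, Hhi.
      ram_step query. rewrite Hone. ram_step query. rewrite Htwo. fold mid.
      ram_step query. rewrite Hb by lia. ram_step query. rewrite Ht. decide_ltb.
      ram_step query. rewrite Hone. ram_step query. apply reach_refl.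
    + split; [|split; [|split; [|split]]]; simpl_upd; auto. intros x Hx. simpl_upd. auto.
    + simpl_upd. auto.
    + simpl_upd. auto.
    + split; [lia|split; [lia|split; [auto|]]].
      intros _. replace (mid - 1 + 1) with mid by lia. exact Hbelow.
    + lia.
  - eexists; exists mid, hi. split; [|split; [|split; [|split; [|split]]]].
    + ram_step query. rewrite Hlo, Hhi. decide_ltb. ram_step query. rewrite Hlo, Hhi.
      ram_step query. rewrite Hone. ram_step query. rewrite Htwo. fold mid.
      ram_step query. rewrite Hb by lia. ram_step query. rewrite Ht. decide_ltb.
      ram_step query. rewrite Hzero. ram_step query. apply reach_refl.
    + split; [|split; [|split; [|split]]]; simpl_upd; auto. intros x Hx. simpl_upd. auto.
    + simpl_upd. lia.
    + simpl_upd. auto.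
    + split; [lia|split; [lia|split; [auto|auto]]].
    + lia.
Qed.

Lemma binary_search t n : forall M lo hi, (Z.to_nat (hi - lo) <= n)%nat ->
  search_mem t M -> M r_lo = lo -> M r_hi = hi -> brackets t lo hi ->
  exists k M', reach query (14%nat, M) (26%nat, M') k /\
    (k <= 8 * Z.to_nat (Z.log2 (2 * (hi - lo))) + 3)%nat /\ brackets t (M' r_ans) (M' r_ans).
Proof.
  induction n as [|n IH]; intros M lo hi Hn HM Hlo Hhi Hb;
    (destruct (Z.eq_dec lo hi) as [<-|Hne];
     [destruct (search_exit t M lo HM Hlo Hhi) as (M' & R & Hans);
      exists 3%nat, M'; rewrite Hans; split; [exact R|split; [lia|exact Hb]]|]);
    destruct Hb as [Hlohi Hb']; [lia|].
  destruct (search_step t M lo hi HM Hlo Hhi ltac:(lia) (conj Hlohi Hb'))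
    as (M1 & lo' & hi' & R1 & HM1 & Hlo' & Hhi' & Hb1 & Hhalf).
  pose proof (proj1 Hb1).
  destruct (IH M1 lo' hi' ltac:(lia) HM1 Hlo' Hhi' Hb1) as (k & M' & R & Hk & Hans).
  exists (8 + k)%nat, M'. split; [exact (reach_trans _ _ _ _ _ _ R1 R)|split; [|exact Hans]].
  pose proof (log2_double_lt (hi - lo) (hi' - lo') ltac:(lia) Hhalf).
  pose proof (Z.log2_nonneg (2 * (hi' - lo'))). lia.
Qed.

Lemma query_below M t : preprocessed M -> t < bv 1 ->
  exists M', reach query (0%nat, upd M r_t t) (26%nat, M') 2 /\ M' r_ans = 0.
Proof.
  intros (_ & Hb & _) Ht. pose proof m_pos. eexists. split.
  - ram_step query. ram_step query. rewrite Hb by lia. decide_ltb. apply reach_refl.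
  - simpl_upd. reflexivity.
Qed.

Lemma query_setup M t : preprocessed M -> bv 1 <= t ->
  exists M' n, reach query (0%nat, upd M r_t t) (14%nat, M') n /\ (n <= 14)%nat /\
    search_mem t M' /\ M' r_lo = M (m + 2 + (query_bucket t - 1)) /\
    M' r_hi = M (m + 2 + query_bucket t).
Proof.
  intros (H0 & Hb & Hlogb1 & Hwidth & Htable & Hone & _) Ht.
  pose proof m_pos. pose proof width_pos. pose proof (bv_pos 1 ltac:(lia)).
  assert (lg 1 <= Z.log2 t) by (apply Z.log2_le_mono; lia).
  set (q0 := (Z.log2 t - lg 1) / width).
  assert (0 <= q0) by (apply Z.div_pos; lia).
  unfold query_bucket; fold q0.
  destruct (Z.ltb_spec q0 (m - 1)).
  - do 2 eexists. split; [|split; [|split; [|split]]].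
    + ram_step query. ram_step query. rewrite Hb by lia. decide_ltb.
      ram_step query. ram_step query. ram_step query. ram_step query. rewrite Hlogb1.
      ram_step query. rewrite Hwidth. fold q0. ram_step query. rewrite H0, Hone.
      ram_step query. decide_ltb. ram_step query. rewrite Htable.
      ram_step query. ram_step query. rewrite Hone. ram_step query. apply reach_refl.
    + lia.
    + repeat split; simpl_upd; auto. intros x Hx. simpl_upd. auto.
    + simpl_upd. f_equal. lia.
    + simpl_upd. f_equal. lia.
  - do 2 eexists. split; [|split; [|split; [|split]]].
    + ram_step query. ram_step query. rewrite Hb by lia. decide_ltb.
      ram_step query. ram_step query. ram_step query. ram_step query. rewrite Hlogb1.
      ram_step query. rewrite Hwidth. fold q0. ram_step query. rewrite H0, Hone.
      ram_step query. decide_ltb. ram_step query. ram_step query. rewrite Htable.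
      ram_step query. ram_step query. rewrite Hone. ram_step query. apply reach_refl.
    + lia.
    + repeat split; simpl_upd; auto. intros x Hx. simpl_upd. auto.
    + simpl_upd. f_equal. lia.
    + simpl_upd. f_equal. lia.
Qed.

Lemma query_correct M t : preprocessed M ->
  exists k M', reach query (0%nat, upd M r_t t) (26%nat, M') k /\
    (k <= 17 + 8 * Z.to_nat (Z.log2 (2 * width)))%nat /\ brackets t (M' r_ans) (M' r_ans).
Proof.
  intros HM. pose proof m_pos. destruct (Z.ltb_spec t (bv 1)) as [Hbelow|Habove].
  - destruct (query_below M t HM Hbelow) as (M' & R & Hans).
    exists 2%nat, M'. rewrite Hans. repeat split; auto; lia.
  - destruct (query_setup M t HM Habove) as (M1 & n1 & R1 & Hn1 & HS & Hlo & Hhi).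
    assert (Hq : 0 <= query_bucket t <= m - 1).
    { pose proof width_pos. pose proof (bv_pos 1 ltac:(lia)).
      assert (lg 1 <= Z.log2 t) by (apply Z.log2_le_mono; lia).
      pose proof (Z.div_pos (Z.log2 t - lg 1) width ltac:(lia) ltac:(lia)).
      unfold query_bucket; lia. }
    destruct HM as (_ & _ & _ & _ & _ & _ & Htab).
    pose proof (Htab (query_bucket t - 1) ltac:(lia)) as Elo.
    pose proof (Htab (query_bucket t) ltac:(lia)) as Ehi.
    rewrite <- Hlo in Elo. rewrite <- Hhi in Ehi.
    pose proof (table_brackets t _ _ Habove Elo Ehi) as Hbr.
    pose proof (table_entry_gap _ _ _ Elo Ehi) as Hgap'.
    destruct (binary_search t _ M1 _ _ (le_n _) HS eq_refl eq_refl Hbr) as (k & M' & R & Hk & Hans).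
    exists (n1 + k)%nat, M'. split; [exact (reach_trans _ _ _ _ _ _ R1 R)|split; [|exact Hans]].
    destruct Hbr as [Hord _].
    assert (Z.log2 (2 * (M1 r_hi - M1 r_lo)) <= Z.log2 (2 * width))
      by (apply Z.log2_le_mono; lia).
    pose proof (Z.log2_nonneg (2 * (M1 r_hi - M1 r_lo))). lia.
Qed.

Definition first_pass_entry (j q v : Z) : Prop :=
  (v = 0 /\ forall i, 1 <= i < j -> bucket i <> q) \/
  (1 <= v < j /\ bucket v = q /\ forall i, v < i < j -> bucket i <> q).

Lemma first_pass_nil q : first_pass_entry 1 q 0.
Proof. left. split; [reflexivity|lia]. Qed.

Lemma first_pass_hit j : 1 <= j -> first_pass_entry (j + 1) (bucket j) j.
Proof. intros. right. repeat split; auto; lia. Qed.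

Lemma first_pass_miss j q v : bucket j <> q -> first_pass_entry j q v -> first_pass_entry (j + 1) q v.
Proof.
  intros Hj [[-> Hnone]|(Hv & Hq & Hlast)].
  - left. split; [reflexivity|]. intros i Hi.
    destruct (Z.eq_dec i j) as [->|]; [exact Hj|apply Hnone; lia].
  - right. split; [lia|split; [exact Hq|]]. intros i Hi.
    destruct (Z.eq_dec i j) as [->|]; [exact Hj|apply Hlast; lia].
Qed.

Lemma first_pass_range q v : first_pass_entry (m + 1) q v -> 0 <= v <= m.
Proof. pose proof m_pos. intros [[-> _]|(Hv & _)]; lia. Qed.

Lemma table_entry_of_last q v : first_pass_entry (m + 1) q v -> 0 < v -> table_entry q v.
Proof.
  intros [[-> _]|(Hv & Hq & Hlast)] Hpos; [lia|].
  split; [lia|]. intros j Hj. split.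
  - intros. rewrite <- Hq. apply bucket_mono; lia.
  - intros Hjq. destruct (Z.le_gt_cases j v); auto.
    pose proof (bucket_mono v j ltac:(lia) ltac:(lia)). specialize (Hlast j ltac:(lia)). lia.
Qed.

Lemma table_entry_of_empty q w :
  first_pass_entry (m + 1) q 0 -> table_entry (q - 1) w -> table_entry q w.
Proof.
  intros [[_ Hnone]|(Hv & _)] [Hw Fw]; [|lia].
  split; [exact Hw|]. intros j Hj. rewrite Fw by auto. specialize (Hnone j ltac:(lia)). lia.
Qed.

Definition pre_mem (M : memory) : Prop :=
  M 0 = m /\ (forall x, 1 <= x <= m -> M x = bv x) /\ M (m + 1) = 0 /\
  M r_logb1 = lg 1 /\ M r_width = width /\ M r_table = m + 2 /\ M r_one = 1.

Lemma pre_mem_upd M a v : (a < r_table /\ a <> r_one) \/ m + 1 < a -> pre_mem M -> pre_mem (upd M a v).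
Proof.
  intros Ha (H0 & Hb & Hm1 & Hlogb1 & Hwidth & Htable & Hone). pose proof m_pos.
  repeat split; simpl_upd; auto. intros x Hx. simpl_upd. auto.
Qed.

Lemma first_pass_step M j : pre_mem M -> M r_j = j -> 1 <= j <= m ->
  (forall q, 0 <= q < m -> first_pass_entry j q (M (m + 2 + q))) ->
  exists M', reach preprocess (10%nat, M) (10%nat, M') 9 /\ pre_mem M' /\ M' r_j = j + 1 /\
    forall q, 0 <= q < m -> first_pass_entry (j + 1) q (M' (m + 2 + q)).
Proof.
  intros HM Hj Hjm HF. pose proof HM as (H0 & Hb & _ & Hlogb1 & Hwidth & Htable & Hone).
  pose proof (bucket_range j Hjm). eexists. split; [|split; [|split]].
  - ram_step preprocess. rewrite H0, Hj. decide_ltb.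
    ram_step preprocess. rewrite Hj, Hb by lia. ram_step preprocess. fold (lg j).
    ram_step preprocess. rewrite Hlogb1. ram_step preprocess. rewrite Hwidth. fold (bucket j).
    ram_step preprocess. rewrite Htable. ram_step preprocess. rewrite Hj.
    ram_step preprocess. rewrite Hj, Hone. ram_step preprocess. apply reach_refl.
  - repeat (apply pre_mem_upd; [lia|]). exact HM.
  - simpl_upd. reflexivity.
  - intros q Hq. simpl_upd. destruct (Z.eq_dec q (bucket j)) as [->|Hne].
    + rewrite upd_eq by lia. apply first_pass_hit; lia.
    + rewrite upd_neq by lia. simpl_upd. apply first_pass_miss; auto.
Qed.

Lemma first_pass n : forall M j, Z.to_nat (m + 1 - j) = n -> pre_mem M -> M r_j = j ->
  1 <= j <= m + 1 -> (forall q, 0 <= q < m -> first_pass_entry j q (M (m + 2 + q))) ->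
  exists k M', reach preprocess (10%nat, M) (19%nat, M') k /\ (k <= 9 * n + 1)%nat /\
    pre_mem M' /\ forall q, 0 <= q < m -> first_pass_entry (m + 1) q (M' (m + 2 + q)).
Proof.
  induction n as [|n IH]; intros M j Hn HM Hj Hjm HF.
  - assert (j = m + 1) as -> by lia. exists 1%nat, M.
    split; [|split; [lia|split; auto]].
    ram_step preprocess. rewrite (proj1 HM), Hj. decide_ltb. apply reach_refl.
  - destruct (first_pass_step M j HM Hj ltac:(lia) HF) as (M1 & R1 & HM1 & Hj1 & HF1).
    destruct (IH M1 (j + 1) ltac:(lia) HM1 Hj1 ltac:(lia) HF1) as (k & M' & R & Hk & HM' & HF').
    exists (9 + k)%nat, M'. split; [exact (reach_trans _ _ _ _ _ _ R1 R)|split; [lia|auto]].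
Qed.

Definition fill_mem (q0 : Z) (M : memory) : Prop :=
  pre_mem M /\ M r_cur = m + 2 + q0 /\ M r_end = m + 2 + m /\ M r_zero = 0 /\ 0 <= q0 <= m /\
  (forall q, -1 <= q < q0 -> table_entry q (M (m + 2 + q))) /\
  (forall q, q0 <= q < m -> first_pass_entry (m + 1) q (M (m + 2 + q))).

Lemma fill_step M q0 : fill_mem q0 M -> q0 < m ->
  exists M' k, reach preprocess (22%nat, M) (22%nat, M') k /\ (k <= 8)%nat /\ fill_mem (q0 + 1) M'.
Proof.
  intros (HM & Hcur & Hend & Hzero & Hq0 & HF & HG) Hlt.
  pose proof HM as (_ & _ & _ & _ & _ & _ & Hone).
  pose proof (first_pass_range _ _ (HG q0 ltac:(lia))).
  destruct (Z.ltb_spec 0 (M (m + 2 + q0))) as [Hpos|Hempty].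
  - do 2 eexists. split; [|split; [|refine (conj _ (conj _ (conj _ (conj _ (conj _ (conj _ _))))))]].
    + ram_step preprocess. rewrite Hcur, Hend. decide_ltb. ram_step preprocess. rewrite Hcur.
      ram_step preprocess. rewrite Hzero. decide_ltb. ram_step preprocess. rewrite Hcur, Hone.
      ram_step preprocess. apply reach_refl.
    + lia.
    + repeat (apply pre_mem_upd; [lia|]). exact HM.
    + simpl_upd. lia.
    + simpl_upd. auto.
    + simpl_upd. auto.
    + lia.
    + intros q Hq. simpl_upd. destruct (Z.eq_dec q q0) as [->|].
      * apply table_entry_of_last; [apply HG; lia|exact Hpos].
      * apply HF; lia.
    + intros q Hq. simpl_upd. apply HG; lia.
  - assert (Hnil : M (m + 2 + q0) = 0) by lia.
    do 2 eexists. split; [|split; [|refine (conj _ (conj _ (conj _ (conj _ (conj _ (conj _ _))))))]].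
    + ram_step preprocess. rewrite Hcur, Hend. decide_ltb. ram_step preprocess. rewrite Hcur.
      ram_step preprocess. rewrite Hzero. decide_ltb. ram_step preprocess. rewrite Hcur, Hone.
      ram_step preprocess. ram_step preprocess. rewrite Hcur.
      ram_step preprocess. rewrite Hcur, Hone. ram_step preprocess. apply reach_refl.
    + lia.
    + repeat (apply pre_mem_upd; [lia|]). exact HM.
    + simpl_upd. lia.
    + simpl_upd. auto.
    + simpl_upd. auto.
    + lia.
    + intros q Hq. simpl_upd. destruct (Z.eq_dec q q0) as [->|].
      * rewrite upd_eq by lia. simpl_upd. apply table_entry_of_empty.
        -- rewrite <- Hnil. apply HG; lia.
        -- replace (m + 2 + q0 - 1) with (m + 2 + (q0 - 1)) by lia. apply HF; lia.
      * rewrite upd_neq by lia. simpl_upd. apply HF; lia.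
    + intros q Hq. simpl_upd. apply HG; lia.
Qed.

Lemma fill_pass n : forall M q0, Z.to_nat (m - q0) = n -> fill_mem q0 M ->
  exists k M', reach preprocess (22%nat, M) (31%nat, M') k /\ (k <= 8 * n + 2)%nat /\
    preprocessed M'.
Proof.
  induction n as [|n IH]; intros M q0 Hn HM.
  - pose proof HM as ((H0 & Hb & _ & Hlogb1 & Hwidth & Htable & Hone) & Hcur & Hend & _ & Hq0 & HF & _).
    assert (q0 = m) as -> by lia. exists 2%nat, M. split; [|split; [lia|]].
    + ram_step preprocess. rewrite Hcur, Hend. decide_ltb. ram_step preprocess. apply reach_refl.
    + refine (conj H0 (conj Hb (conj Hlogb1 (conj Hwidth (conj Htable (conj Hone _)))))).
      intros q Hq. apply HF; lia.
  - destruct (fill_step M q0 HM ltac:(lia))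
      as (M1 & k1 & R1 & Hk1 & HM1).
    destruct (IH M1 (q0 + 1) ltac:(lia) HM1) as (k & M' & R & Hk & HP).
    exists (k1 + k)%nat, M'. split; [exact (reach_trans _ _ _ _ _ _ R1 R)|split; [lia|exact HP]].
Qed.

Lemma input_mem_seq x : 1 <= x <= m -> input_mem b x = bv x.
Proof.
  intros Hx. unfold m in Hx. unfold input_mem.
  rewrite (proj2 (Z.eqb_neq x 0)), (proj2 (Z.ltb_lt 0 x)), (proj2 (Z.leb_le _ _)) by lia.
  reflexivity.
Qed.

Lemma input_mem_above x : m < x -> input_mem b x = 0.
Proof.
  intros Hx. unfold m in Hx. unfold input_mem.
  rewrite (proj2 (Z.eqb_neq x 0)), (proj2 (Z.leb_gt _ _)) by lia.
  destruct (0 <? x); reflexivity.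
Qed.

Lemma preprocess_init :
  exists M, reach preprocess (0%nat, input_mem b) (10%nat, M) 10 /\ pre_mem M /\ M r_j = 1 /\
    forall q, 0 <= q < m -> first_pass_entry 1 q (M (m + 2 + q)).
Proof.
  pose proof m_pos. assert (Hsize : input_mem b 0 = m) by reflexivity.
  eexists. split; [|split; [|split]].
  - ram_step preprocess. ram_step preprocess. rewrite (input_mem_seq 1) by lia. fold (lg 1).
    ram_step preprocess. rewrite Hsize. simpl_upd. rewrite (input_mem_seq m) by lia.
    ram_step preprocess. fold (lg m). ram_step preprocess. ram_step preprocess. rewrite Hsize.
    simpl_upd. ram_step preprocess. ram_step preprocess. rewrite Hsize. simpl_upd.
    ram_step preprocess. ram_step preprocess. apply reach_refl.
  - refine (conj _ (conj _ (conj _ (conj _ (conj _ (conj _ _)))))); simpl_upd; auto.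
    + intros x Hx. simpl_upd. apply input_mem_seq; lia.
    + apply input_mem_above; lia.
    + lia.
  - simpl_upd. reflexivity.
  - intros q Hq. simpl_upd. rewrite input_mem_above by lia. apply first_pass_nil.
Qed.

Lemma fill_init M : pre_mem M -> (forall q, 0 <= q < m -> first_pass_entry (m + 1) q (M (m + 2 + q))) ->
  exists M', reach preprocess (19%nat, M) (22%nat, M') 3 /\ fill_mem 0 M'.
Proof.
  intros HM HF. pose proof HM as (H0 & _ & Hm1 & _ & _ & Htable & _). pose proof m_pos.
  eexists. split.
  - ram_step preprocess. ram_step preprocess. rewrite Htable.
    ram_step preprocess. rewrite Htable, H0. apply reach_refl.
  - refine (conj _ (conj _ (conj _ (conj _ (conj _ (conj _ _)))))).
    + repeat (apply pre_mem_upd; [lia|]). exact HM.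
    + simpl_upd. lia.
    + simpl_upd. lia.
    + simpl_upd. reflexivity.
    + lia.
    + intros q Hq. assert (q = -1) as -> by lia. simpl_upd.
      replace (m + 2 + -1) with (m + 1) by lia. rewrite Hm1. exact table_entry_neg1.
    + intros q Hq. simpl_upd. auto.
Qed.

Lemma preprocess_correct :
  exists k M, reach preprocess (0%nat, input_mem b) (31%nat, M) k /\
    (k <= 16 + 17 * Z.to_nat m)%nat /\ preprocessed M.
Proof.
  pose proof m_pos.
  destruct preprocess_init as (M0 & R0 & HM0 & Hj0 & HF0).
  destruct (first_pass _ M0 1 eq_refl HM0 Hj0 ltac:(lia) HF0) as (k1 & M1 & R1 & Hk1 & HM1 & HF1).
  destruct (fill_init M1 HM1 HF1) as (M2 & R2 & HM2).
  destruct (fill_pass _ M2 0 eq_refl HM2) as (k2 & M3 & R3 & Hk2 & HP).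
  exists (10 + k1 + 3 + k2)%nat, M3. split; [|split; [|exact HP]].
  - exact (reach_trans _ _ _ _ _ _ (reach_trans _ _ _ _ _ _ (reach_trans _ _ _ _ _ _ R0 R1) R2) R3).
  - lia.
Qed.

Lemma query_cost_le : (2 <= D)%nat ->
  (17 + 8 * Z.to_nat (Z.log2 (2 * width)) <= 50 * (1 + Nat.log2 (Nat.log2 D)))%nat.
Proof.
  intros HD. pose proof width_le as Hw. pose proof width_pos. rewrite log2_of_nat in Hw.
  assert (Hl : (1 <= Nat.log2 D)%nat) by (apply (Nat.log2_le_mono 2 D HD)).
  assert (Z.log2 (2 * width) <= Z.log2 (Z.of_nat (Nat.log2 D) * 2 ^ 3))
    by (apply Z.log2_le_mono; lia).
  rewrite Z.log2_mul_pow2, log2_of_nat in * by lia.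
  pose proof (Z.log2_nonneg (2 * width)). lia.
Qed.

End GapSequence.

Theorem mainTheorem11 :
  exists (Ppre Pq : program) (C : nat),
    forall (D : nat) (b : list Z),
      (2 <= D)%nat -> (1 <= length b)%nat -> gap_seq D b ->
      exists (k : nat) (M : memory),
        (k <= C * length b)%nat /\ halts_within Ppre k (input_mem b) M /\
        forall t : Z,
          exists (k' : nat) (M' : memory) (i : nat),
            (k' <= C * (1 + Nat.log2 (Nat.log2 D)))%nat /\
            halts_within Pq k' (upd M (-1) t) M' /\
            M' (-2) = Z.of_nat i /\ located b t i.
Proof.
  exists preprocess, query, 50%nat. intros D b HD Hlen Hgap.
  destruct (preprocess_correct D b Hlen Hgap) as (k & M & Hrun & Hk & HM).
  exists k, M. split; [|split].
  - unfold m in Hk. rewrite Nat2Z.id in Hk. lia.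
  - exact (reach_halts_within _ _ _ _ _ Hrun eq_refl).
  - intros t. destruct (query_correct D b Hlen Hgap M t HM) as (k' & M' & Hrun' & Hk' & Hbr).
    exists k', M', (Z.to_nat (M' r_ans)). split; [|split; [|split]].
    + pose proof (query_cost_le D b Hlen Hgap HD). lia.
    + exact (reach_halts_within _ _ _ _ _ Hrun' eq_refl).
    + destruct Hbr as [Hans _]. lia.
    + exact (brackets_located b Hlen t _ Hbr).
Qed.
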